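(* For $0<\Delta<2$ let $S_1$ be the square with vertices $(\pm1,\pm1,0)$ and $S_2$ the square with vertices $(\Delta\pm1,0,\pm1)$ (both of side length 2); they form a Hopf link. The minimum distance energy of the link $S_1\cup S_2$ is $$E(\Delta)=8+8\left(\frac{1}{(2+\Delta)^2}+\frac{1}{(2-\Delta)^2}+\frac{2}{\Delta^2}+4+2+\frac{4}{1+\Delta^2}\right),$$ where $8$ is the sum of the self-energies of the two squares (4 each) and the remaining term is the cross-energy. The function $E$ has a unique minimizer $\Delta^*$ on $(0,2)$, where $x=(\Delta^* )^2$ is the unique root in $(0,4)$ of $2x^5-10x^4+73x^3-48x^2-40x-32=0$; numerically $\Delta^*\approx1.203$ and $E(\Delta^* )\approx93.5$.
   Context: For a link of closed polygons in $\mathbb R^3$ (each with at least four edges), the minimum distance (MD) energy is $E_{MD}=\sum_{(e,e')}\frac{\ell_e\ell_{e'}}{\mathrm{MD}(e,e')^2}$, summed over all ordered pairs $(e,e')$ of distinct edges that share no vertex (edges on different components never share a vertex), where $\ell_e$ is the length of edge $e$ and $\mathrm{MD}(e,e')$ is the minimum Euclidean distance between the two closed line segments. With this convention a square has MD energy $4$. *)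

From HB Require Import structures.
From mathcomp Require Import all_boot all_order all_algebra.
From mathcomp Require Import all_classical all_reals.
Set Implicit Arguments. Unset Strict Implicit. Unset Printing Implicit Defensive.
Import Order.TTheory GRing.Theory Num.Theory.
Local Open Scope classical_set_scope.
Local Open Scope ring_scope.

Section MD.
Variable R : realType.

Record pt := Pt { px : R; py : R; pz : R }.

Definition pt0 : pt := Pt 0 0 0.

Definition dist (p q : pt) : R :=
  Num.sqrt ((px p - px q) ^+ 2 + (py p - py q) ^+ 2 + (pz p - pz q) ^+ 2).

Definition seg_pt (p q : pt) (t : R) : pt :=
  Pt (px p + t * (px q - px p)) (py p + t * (py q - py p))
     (pz p + t * (pz q - pz p)).

Definition seg_dist (p q r s : pt) : R :=
  inf [set d | exists u v, [/\ 0 <= u <= 1, 0 <= v <= 1 &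
                           d = dist (seg_pt p q u) (seg_pt r s v)]].

(* a closed polygon is given by its cyclic list of vertices P_0 ... P_{n-1};
   its edges are e_i = [P_i, P_{(i+1) mod n}], i < n. A link is a list of
   closed polygons. *)
Definition polygon := seq pt.
Definition link := seq polygon.

Definition vtx (P : polygon) (i : nat) : pt := nth pt0 P (i %% size P)%N.
Definition edge_len (P : polygon) (i : nat) : R := dist (vtx P i) (vtx P i.+1).

Definition share_vertex (n i j : nat) : bool :=
  [|| i == j, (i.+1 %% n == j)%N | (j.+1 %% n == i)%N].

Definition edge_MD (P Q : polygon) (i j : nat) : R :=
  seg_dist (vtx P i) (vtx P i.+1) (vtx Q j) (vtx Q j.+1).

(* minimum distance energy: sum over ordered pairs of distinct edges
   sharing no vertex (edges on different components never share one). *)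
Definition MD_energy (L : link) : R :=
  \sum_(0 <= c < size L) \sum_(0 <= c' < size L)
   \sum_(0 <= i < size (nth [::] L c)) \sum_(0 <= j < size (nth [::] L c'))
     (if (c == c') && share_vertex (size (nth [::] L c)) i j then 0
      else edge_len (nth [::] L c) i * edge_len (nth [::] L c') j
           / (edge_MD (nth [::] L c) (nth [::] L c') i j) ^+ 2).

Definition square1 : polygon :=
  [:: Pt 1 1 0; Pt (-1) 1 0; Pt (-1) (-1) 0; Pt 1 (-1) 0].
Definition square2 (D : R) : polygon :=
  [:: Pt (D + 1) 0 1; Pt (D - 1) 0 1; Pt (D - 1) 0 (-1); Pt (D + 1) 0 (-1)].
Definition hopf_link (D : R) : link := [:: square1; square2 D].

Definition E_formula (D : R) : R :=
  8 + 8 * (1 / (2 + D) ^+ 2 + 1 / (2 - D) ^+ 2 + 2 / D ^+ 2 + 4 + 2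
           + 4 / (1 + D ^+ 2)).

Definition quintic (x : R) : R :=
  2 * x ^+ 5 - 10 * x ^+ 4 + 73 * x ^+ 3 - 48 * x ^+ 2 - 40 * x - 32.

End MD.

(* Every pair of edges of the two squares is parallel to coordinate axes,
   so each minimum distance is attained at explicit segment parameters and is
   certified by a sum-of-squares lower bound; the energy of the link is the two
   self-energies (4 each) plus twice the cross-energy.  With x = D^2 one has
   E(D) = 56 + 8 E_sq x for a rational function E_sq, and after clearing
   denominators E_sq x - E_sq y equals (x - y)^2 Q(x, y) + 4 (x - y)(4 - y) p(y),
   where p is the quintic.  At the root y* of p, which the intermediate value
   theorem places in [1.448, 1.4495], Q(., y* ) is a concave quadratic positive
   at 0 and at 4, hence positive on (0, 4): D* = sqrt y* is the strict minimiser.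
   The root is unique since p < 0 on (0, 1] and p is increasing on [1, 4]. *)

From HB Require Import structures.
From mathcomp Require Import all_boot all_order all_algebra.
From mathcomp Require Import all_classical all_reals.
From mathcomp Require Import ring lra.
Import Order.TTheory GRing.Theory Num.Theory.
Set Implicit Arguments. Unset Strict Implicit. Unset Printing Implicit Defensive.
Local Open Scope ring_scope.

Section SegmentDistance.
Variable R : realType.
Implicit Types p q r s : pt R.

Definition sqdist p q : R :=
  (px p - px q) ^+ 2 + (py p - py q) ^+ 2 + (pz p - pz q) ^+ 2.

Lemma sqdist_ge0 p q : 0 <= sqdist p q.
Proof. by rewrite !addr_ge0 ?sqr_ge0. Qed.

Lemma dist_eq p q (c : R) : 0 <= c -> sqdist p q = c ^+ 2 -> dist p q = c.
Proof. by move=> c_ge0; rewrite /dist -/(sqdist p q) => ->; rewrite sqrtr_sqr ger0_norm. Qed.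

Lemma distC p q : dist p q = dist q p.
Proof. by rewrite /dist; congr Num.sqrt; ring. Qed.

Lemma seg_distC p q r s : seg_dist p q r s = seg_dist r s p q.
Proof.
rewrite /seg_dist; congr inf; apply/seteqP; split=> d [u [v [hu hv ->]]];
  by exists v, u; rewrite distC.
Qed.

Lemma sqr_seg_dist_eq p q r s (u0 v0 c : R) : 0 <= u0 <= 1 -> 0 <= v0 <= 1 ->
  sqdist (seg_pt p q u0) (seg_pt r s v0) = c ->
  (forall u v, 0 <= u <= 1 -> 0 <= v <= 1 -> c <= sqdist (seg_pt p q u) (seg_pt r s v)) ->
  seg_dist p q r s ^+ 2 = c.
Proof.
move=> hu0 hv0 <- c_min.
suff -> : seg_dist p q r s = dist (seg_pt p q u0) (seg_pt r s v0).
  by rewrite sqr_sqrtr // sqdist_ge0.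
apply/eqP; rewrite eq_le; apply/andP; split.
  apply: ge_inf; last by exists u0, v0.
  by exists 0 => _ [u [v [_ _ ->]]]; apply: sqrtr_ge0.
apply: lb_le_inf; first by exists (dist (seg_pt p q u0) (seg_pt r s v0)), u0, v0.
move=> _ [u [v [hu hv ->]]].
by rewrite /dist ler_sqrt; [exact: c_min | exact: sqdist_ge0].
Qed.

End SegmentDistance.

Section TwoComponentLinks.
Variable R : realType.
Implicit Types P Q : polygon R.

Definition self_energy P : R :=
  \sum_(0 <= i < size P) \sum_(0 <= j < size P)
    (if share_vertex (size P) i j then 0
     else edge_len P i * edge_len P j / edge_MD P P i j ^+ 2).

Definition cross_energy P Q : R :=
  \sum_(0 <= i < size P) \sum_(0 <= j < size Q)
    edge_len P i * edge_len Q j / edge_MD P Q i j ^+ 2.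

Lemma cross_energyC P Q : cross_energy P Q = cross_energy Q P.
Proof.
rewrite /cross_energy exchange_big_nat; apply: eq_bigr => i _; apply: eq_bigr => j _.
by rewrite /edge_MD seg_distC [edge_len P j * _]mulrC.
Qed.

Lemma MD_energy_pair P Q :
  MD_energy [:: P; Q] = self_energy P + self_energy Q + 2 * cross_energy P Q.
Proof.
rewrite /MD_energy /= !big_nat_recr //= !(big_geq (leqnn 0)) !add0r.
rewrite -/(self_energy P) -/(self_energy Q) -/(cross_energy P Q) -/(cross_energy Q P).
by rewrite -cross_energyC; ring.
Qed.

Lemma edge_len_mod P i : edge_len P i = edge_len P (i %% size P).
Proof. by rewrite /edge_len /vtx -addn1 -modnDml addn1 modn_mod. Qed.

End TwoComponentLinks.

Section HopfSquares.
Variable R : realType.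

Lemma edge_len_square1 i : edge_len (square1 R) i = 2.
Proof.
rewrite edge_len_mod; have : (i %% 4 < 4)%N by rewrite ltn_mod.
by case: (i %% 4)%N => [|[|[|[|]]]] // _; apply: dist_eq; rewrite ?ler0n /sqdist /=; ring.
Qed.

Lemma edge_len_square2 (D : R) i : edge_len (square2 D) i = 2.
Proof.
rewrite edge_len_mod; have : (i %% 4 < 4)%N by rewrite ltn_mod.
by case: (i %% 4)%N => [|[|[|[|]]]] // _; apply: dist_eq; rewrite ?ler0n /sqdist /=; ring.
Qed.

(* [md_at u0 v0 c] rewrites the first [seg_dist p q r s ^+ 2] of the goal to [c],
   attained at the parameters [u0] and [v0]; its minimality is left to [nra]. *)
Local Tactic Notation "md_at" uconstr(u0) uconstr(v0) uconstr(c) :=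
  rewrite (@sqr_seg_dist_eq R _ _ _ _ u0 v0 c);
  [ | by apply/andP; split; lra | by apply/andP; split; lra
  | by rewrite /sqdist /=; field
  | move=> u v /andP[? ?] /andP[? ?]; rewrite /sqdist /=;
    match goal with |- is_true (_ <= ?a ^+ 2 + ?b ^+ 2 + ?c ^+ 2) =>
      have := sqr_ge0 a; have := sqr_ge0 b; have := sqr_ge0 c end; nra ].

Lemma self_energy_square1 : self_energy (square1 R) = 4.
Proof.
rewrite /self_energy /= !big_nat_recr //= !(big_geq (leqnn 0)) !add0r.
rewrite !edge_len_square1 /edge_MD /vtx /=.
do 4 md_at 0 1 4.
lra.
Qed.

Lemma self_energy_square2 (D : R) : self_energy (square2 D) = 4.
Proof.
rewrite /self_energy /= !big_nat_recr //= !(big_geq (leqnn 0)) !add0r.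
rewrite !edge_len_square2 /edge_MD /vtx /=.
do 4 md_at 0 1 4.
lra.
Qed.

Lemma cross_energy_hopf (D : R) : 0 < D < 2 ->
  cross_energy (square1 R) (square2 D) =
  4 * (1 / (2 + D) ^+ 2 + 1 / (2 - D) ^+ 2 + 2 / D ^+ 2 + 6 + 4 / (1 + D ^+ 2)).
Proof.
move=> /andP[D_gt0 D_lt2].
rewrite /cross_energy /= !big_nat_recr //= !(big_geq (leqnn 0)) !add0r.
rewrite !edge_len_square1 !edge_len_square2 /edge_MD /vtx /=.
(* one line per edge of [square1], against the four edges of [square2] *)
md_at 0 (D / 2) 2; md_at (1 - D / 2) (1 / 2) 1;
  md_at 0 ((2 - D) / 2) 2; md_at 0 (1 / 2) (1 + D ^+ 2).
md_at (1 / 2) 1 (1 + D ^+ 2); md_at (1 / 2) (1 / 2) (D ^+ 2);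
  md_at (1 / 2) 0 (1 + D ^+ 2); md_at (1 / 2) (1 / 2) ((2 + D) ^+ 2).
md_at 1 (D / 2) 2; md_at (D / 2) (1 / 2) 1;
  md_at 1 ((2 - D) / 2) 2; md_at 1 (1 / 2) (1 + D ^+ 2).
md_at (1 / 2) (D / 2) 1; md_at (1 / 2) (1 / 2) ((2 - D) ^+ 2);
  md_at (1 / 2) ((2 - D) / 2) 1; md_at (1 / 2) (1 / 2) (D ^+ 2).
have D_neq0 : D != 0 by rewrite gt_eqF.
have sub_neq0 : 2 - D != 0 by rewrite gt_eqF ?subr_gt0.
have add_neq0 : 2 + D != 0 by rewrite gt_eqF ?addr_gt0.
have sqr_add1_neq0 : 1 + D ^+ 2 != 0 by rewrite gt_eqF ?ltr_pwDl ?sqr_ge0.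
by field; rewrite D_neq0 sub_neq0 add_neq0 sqr_add1_neq0.
Qed.

Lemma MD_energy_hopf (D : R) : 0 < D < 2 -> MD_energy (hopf_link D) = E_formula D.
Proof.
move=> D_bounds; rewrite MD_energy_pair self_energy_square1 self_energy_square2.
by rewrite cross_energy_hopf // /E_formula; ring.
Qed.

End HopfSquares.

Lemma concave_quadratic_gt0 (R : realFieldType) (a b c m x : R) : a <= 0 -> 0 < c ->
  0 < a * m ^+ 2 + b * m + c -> 0 < x < m -> 0 < a * x ^+ 2 + b * x + c.
Proof.
move=> a_le0 c_gt0 fm_gt0 /andP[x_gt0 x_ltm].
have m_gt0 : 0 < m by apply: lt_trans x_ltm.
have -> : a * x ^+ 2 + b * x + c =
    ((m - x) * c + x * (a * m ^+ 2 + b * m + c) - a * m * x * (m - x)) / m.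
  by field; rewrite gt_eqF.
apply: divr_gt0 => //.
have h1 : 0 < (m - x) * c by rewrite mulr_gt0 // subr_gt0.
have h2 : 0 < x * (a * m ^+ 2 + b * m + c) by rewrite mulr_gt0.
have h3 : a * m * x * (m - x) <= 0.
  by rewrite -!mulrA mulr_le0_ge0 // !mulr_ge0 ?subr_ge0 // ltW.
lra.
Qed.

Section Quintic.
Variable R : realType.
Implicit Types x y : R.

Lemma quintic_ltr x y : 1 <= x -> x < y -> y <= 4 -> quintic x < quintic y.
Proof.
move=> x_ge1 x_lty y_le4; rewrite -subr_gt0.
have -> : quintic y - quintic x = (y - x) *
    (2 * (x ^+ 4 + x ^+ 3 * y + x ^+ 2 * y ^+ 2 + x * y ^+ 3 + y ^+ 4)
     - 10 * (x ^+ 3 + x ^+ 2 * y + x * y ^+ 2 + y ^+ 3)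
     + 73 * (x ^+ 2 + x * y + y ^+ 2) - 48 * (x + y) - 40).
  by rewrite /quintic; ring.
by apply: mulr_gt0; [rewrite subr_gt0 | nra].
Qed.

Lemma quintic_lt0 x : 0 < x <= 1 -> quintic x < 0.
Proof. by rewrite /quintic => /andP[x_gt0 x_le1]; nra. Qed.

Lemma quintic_root_unique x y : 0 < x < 4 -> quintic x = 0 ->
  1 <= y <= 4 -> quintic y = 0 -> x = y.
Proof.
move=> /andP[x_gt0 x_lt4] qx /andP[y_ge1 y_le4] qy.
have x_gt1 : 1 < x.
  rewrite ltNge; apply/negP => x_le1.
  have : quintic x < 0 by apply: quintic_lt0; rewrite x_gt0 x_le1.
  by rewrite qx ltxx.
case: (ltgtP x y) => // [x_lty | y_ltx].
  by have := quintic_ltr (ltW x_gt1) x_lty y_le4; rewrite qx qy ltxx.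
by have := quintic_ltr y_ge1 y_ltx (ltW x_lt4); rewrite qx qy ltxx.
Qed.

Lemma quintic_root_between :
  exists2 x : R, 1448 / 1000 <= x <= 14495 / 10000 & quintic x = 0.
Proof.
pose p : {poly R} :=
  2%:P * 'X^5 - 10%:P * 'X^4 + 73%:P * 'X^3 - 48%:P * 'X^2 - 40%:P * 'X - 32%:P.
have pE x : p.[x] = quintic x.
  by rewrite !(hornerD, hornerN, hornerM, hornerC, hornerXn, hornerX) /quintic.
have [x x_bounds /rootP] : exists2 x, 1448 / 1000 <= x <= 14495 / 10000 & root p x.
  by apply: poly_ivt; rewrite ?pE /quintic; lra.
by rewrite pE; exists x.
Qed.

Lemma root_window_bounds y : 1448 / 1000 <= y <= 14495 / 10000 -> 1 < y < 4.
Proof. by move=> /andP[y_ge y_le]; apply/andP; split; lra. Qed.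

Lemma sqrt_root_window y : 1448 / 1000 <= y <= 14495 / 10000 ->
  `|Num.sqrt y - 1203 / 1000| < 1 / 1000.
Proof.
move=> /andP[y_ge y_le].
have y_ge0 : 0 <= y by apply: le_trans y_ge; lra.
have sqrt_ge0 := sqrtr_ge0 y; have sqrt_sq := sqr_sqrtr y_ge0.
by rewrite ltr_norml; apply/andP; split; nra.
Qed.

Lemma sqr_lt4 (D : R) : 0 <= D -> (D ^+ 2 < 4) = (D < 2).
Proof. by move=> D_ge0; apply/idP/idP => ?; nra. Qed.

Definition E_sq x : R := (8 + 2 * x) / (4 - x) ^+ 2 + 2 / x + 4 / (1 + x).

Lemma E_formula_sq (D : R) : 0 < D < 2 -> E_formula D = 56 + 8 * E_sq (D ^+ 2).
Proof.
move=> /andP[D_gt0 D_lt2]; rewrite /E_formula /E_sq.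
have D_neq0 : D != 0 by rewrite gt_eqF.
have sub_neq0 : 2 - D != 0 by rewrite gt_eqF ?subr_gt0.
have add_neq0 : 2 + D != 0 by rewrite gt_eqF ?addr_gt0.
have sqr_add1_neq0 : 1 + D ^+ 2 != 0 by rewrite gt_eqF ?ltr_pwDl ?sqr_ge0.
have sqr_sub_neq0 : 4 - D ^+ 2 != 0 by rewrite gt_eqF ?subr_gt0 //; nra.
by field; rewrite D_neq0 sub_neq0 add_neq0 sqr_add1_neq0 sqr_sub_neq0.
Qed.

Definition E_sq_den x : R := x * (1 + x) * (4 - x) ^+ 2.

Lemma E_sq_den_gt0 x : 0 < x < 4 -> 0 < E_sq_den x.
Proof. by move=> /andP[x_gt0 x_lt4]; rewrite /E_sq_den !mulr_gt0 ?exprn_gt0 //; lra. Qed.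

Lemma E_sq_root_window y : 1448 / 1000 <= y <= 14495 / 10000 ->
  `|56 + 8 * E_sq y - 935 / 10| < 1 / 20.
Proof.
move=> y_window; rewrite ltr_norml.
suff /andP[E_lo E_hi] : 3745 / 800 < E_sq y < 3755 / 800 by apply/andP; split; lra.
have /andP[y_gt1 y_lt4] := root_window_bounds y_window.
move: y_window => /andP[y_ge y_le].
have y_gt0 : 0 < y := lt_trans ltr01 y_gt1.
have den_gt0 : 0 < E_sq_den y by apply: E_sq_den_gt0; rewrite y_gt0.
have -> : E_sq y = ((8 + 2 * y) * y * (1 + y) + 2 * (1 + y) * (4 - y) ^+ 2
                    + 4 * y * (4 - y) ^+ 2) / E_sq_den y.
  rewrite /E_sq /E_sq_den; field.
  by rewrite !gt_eqF //; [apply: addr_gt0 | rewrite subr_gt0].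
by rewrite ltr_pdivlMr // ltr_pdivrMr // /E_sq_den; apply/andP; split; nra.
Qed.

Definition sub_coef2 y : R := -32 - 88 * y + 36 * y ^+ 2 - 8 * y ^+ 3.
Definition sub_coef1 y : R := 224 + 680 * y - 364 * y ^+ 2 + 72 * y ^+ 3 - 8 * y ^+ 4.
Definition sub_coef0 y : R :=
  -256 - 832 * y + 1392 * y ^+ 2 - 452 * y ^+ 3 + 72 * y ^+ 4 - 8 * y ^+ 5.

Lemma E_sq_sub x y : 0 < x < 4 -> 0 < y < 4 ->
  (E_sq x - E_sq y) * (E_sq_den x * E_sq_den y) =
  (x - y) ^+ 2 * (sub_coef2 y * x ^+ 2 + sub_coef1 y * x + sub_coef0 y)
  + 4 * (x - y) * (4 - y) * quintic y.
Proof.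
move=> /andP[x_gt0 x_lt4] /andP[y_gt0 y_lt4].
rewrite /E_sq /E_sq_den /sub_coef0 /sub_coef1 /sub_coef2 /quintic; field.
by rewrite !gt_eqF //; lra.
Qed.

Section RootWindow.
Variable y : R.
Hypothesis y_window : 1448 / 1000 <= y <= 14495 / 10000.

Lemma sub_coef2_lt0 : sub_coef2 y < 0.
Proof. by move: y_window; rewrite /sub_coef2 => /andP[y_ge y_le]; nra. Qed.

Lemma sub_coef0_gt0 : 0 < sub_coef0 y.
Proof. by move: y_window; rewrite /sub_coef0 => /andP[y_ge y_le]; nra. Qed.

Lemma sub_coef_at4_gt0 : 0 < sub_coef2 y * 4 ^+ 2 + sub_coef1 y * 4 + sub_coef0 y.
Proof.
by move: y_window; rewrite /sub_coef0 /sub_coef1 /sub_coef2 => /andP[y_ge y_le]; nra.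
Qed.

Lemma E_sq_min x : 0 < x < 4 -> quintic y = 0 -> x != y -> E_sq y < E_sq x.
Proof.
move=> x_bounds qy x_neqy.
have y_bounds : 0 < y < 4.
  by have /andP[y_gt1 y_lt4] := root_window_bounds y_window; rewrite y_lt4 (lt_trans ltr01).
have cofactor_gt0 : 0 < sub_coef2 y * x ^+ 2 + sub_coef1 y * x + sub_coef0 y.
  apply: (concave_quadratic_gt0 (m := 4)) => //.
  - exact/ltW/sub_coef2_lt0.
  - exact: sub_coef0_gt0.
  - exact: sub_coef_at4_gt0.
have sqr_gt0 : 0 < (x - y) ^+ 2 by rewrite exprn_even_gt0 // subr_eq0.
have dens_gt0 := mulr_gt0 (E_sq_den_gt0 x_bounds) (E_sq_den_gt0 y_bounds).
rewrite -subr_gt0 -(pmulr_lgt0 _ dens_gt0) E_sq_sub // qy mulr0 addr0.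
exact: mulr_gt0.
Qed.

End RootWindow.

End Quintic.

Theorem mainTheorem4 (R : realType) :
  (forall D : R, 0 < D < 2 -> MD_energy (hopf_link D) = E_formula D) /\
  (exists Dstar : R,
     [/\ 0 < Dstar < 2,
         (forall D : R, 0 < D < 2 -> D != Dstar -> E_formula Dstar < E_formula D),
         (quintic (Dstar ^+ 2) = 0 /\
          forall x : R, 0 < x < 4 -> quintic x = 0 -> x = Dstar ^+ 2)
       & `|Dstar - 1203 / 1000| < 1 / 1000 /\
         `|E_formula Dstar - 935 / 10| < 1 / 20]).
Proof.
split; first exact: MD_energy_hopf.
have [xs xs_window qxs] := quintic_root_between R.
have /andP[xs_gt1 xs_lt4] := root_window_bounds xs_window.
have xs_gt0 : 0 < xs := lt_trans ltr01 xs_gt1.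
have Ds_sq : Num.sqrt xs ^+ 2 = xs by rewrite sqr_sqrtr // ltW.
have Ds_gt0 : 0 < Num.sqrt xs by rewrite sqrtr_gt0.
have Ds_bounds : 0 < Num.sqrt xs < 2 by rewrite Ds_gt0 -sqr_lt4 ?Ds_sq // ltW.
exists (Num.sqrt xs); split => //.
- move=> D D_bounds D_neq; have /andP[D_gt0 D_lt2] := D_bounds.
  rewrite !E_formula_sq // Ds_sq ltrD2l ltr_pM2l //.
  apply: E_sq_min => //; first by rewrite exprn_gt0 //= sqr_lt4 // ltW.
  by apply: contra D_neq => /eqP <-; rewrite sqrtr_sqr ger0_norm // ltW.
- rewrite Ds_sq; split=> // x x_bounds qx.
  by apply: (quintic_root_unique x_bounds qx _ qxs); rewrite (ltW xs_gt1) (ltW xs_lt4).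
- split; first exact: sqrt_root_window.
  by rewrite E_formula_sq // Ds_sq; exact: E_sq_root_window.
Qed.
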